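(* Let $S=\{p_1,\dots,p_n\}\subset\mathbb{R}^d$ satisfy the sparsity and bounded doubling dimension assumptions, and let $W\in\mathbb{R}^{n\times n}$ be its Gaussian affinity matrix. Then there is a factor $\mathrm{polylog}(n)=(\log n)^{O(d_0)}$ such that for all $1\le i\le n$, $$\frac{1}{\mathrm{polylog}(n)}\,\frac{\|W\|_F^2}{n}\;\le\; C_i\;\le\;\mathrm{polylog}(n)\,\frac{\|W\|_F^2}{n},$$ where $C_i=\|W_{:,i}\|^2$ is the squared norm of the $i$-th column of $W$.
   Context: $W_{i,j}=\exp(-\|p_i-p_j\|^2/\sigma)$ with a fixed parameter $\sigma>0$ treated as a constant. Sparsity assumption: for all $i\ne j$, $\|p_i-p_j\|\ge 0.1\,\sigma/\log n$. Bounded doubling dimension assumption: there is a constant $d_0$ such that for every $r>0$ and $\epsilon>0$, any ball of radius $r$ contains at most $O((r/\epsilon)^{d_0})$ points of $S$ that are pairwise at distance at least $\epsilon$. $\|W\|_F$ is the Frobenius norm. *)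

From Stdlib Require Import Reals List.
Import ListNotations.
Open Scope R_scope.

(* A point of R^d is a function nat -> R; only coordinates 0..d-1 matter.
   A point set S = {p_1,...,p_n} is p : nat -> (nat -> R), indices 0..n-1. *)

Definition rsum (n : nat) (f : nat -> R) : R :=
  fold_right Rplus 0 (map f (seq 0 n)).

Definition sqdist (d : nat) (x y : nat -> R) : R :=
  rsum d (fun k => (x k - y k) ^ 2).

Definition edist (d : nat) (x y : nat -> R) : R := sqrt (sqdist d x y).

Definition Waff (sigma : R) (d : nat) (p : nat -> nat -> R) (i j : nat) : R :=
  exp (- sqdist d (p i) (p j) / sigma).

Definition col_sqnorm (sigma : R) (d n : nat) (p : nat -> nat -> R) (i : nat) : R :=
  rsum n (fun j => (Waff sigma d p j i) ^ 2).

Definition frob_sq (sigma : R) (d n : nat) (p : nat -> nat -> R) : R :=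
  rsum n (fun i => rsum n (fun j => (Waff sigma d p i j) ^ 2)).

Definition sparse (sigma : R) (d n : nat) (p : nat -> nat -> R) : Prop :=
  forall i j, (i < n)%nat -> (j < n)%nat -> i <> j ->
    edist d (p i) (p j) >= (1/10) * sigma / ln (INR n).

(* Bounded doubling dimension with exponent d0 and O-constant K:
   any ball of radius r contains at most K (r/eps)^d0 points of S that are
   pairwise at distance >= eps (for 0 < eps <= r). *)
Definition doubling (d0 K : R) (d n : nat) (p : nat -> nat -> R) : Prop :=
  forall (c : nat -> R) (r eps : R), 0 < eps -> eps <= r ->
  forall T : list nat, NoDup T ->
    (forall j, In j T -> (j < n)%nat /\ edist d c (p j) <= r) ->
    (forall j k, In j T -> In k T -> j <> k -> edist d (p j) (p k) >= eps) ->
    INR (length T) <= K * Rpower (r / eps) d0.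

(* Every row of W has squared norm between 1 and polylog(n). The diagonal entry
   contributes 1. Within distance r = O(sigma + ln n) of p_i the points are
   (sigma / (10 ln n))-separated, so by the doubling assumption there are at most
   K (10 r ln n / sigma)^d0 = O((ln n)^(2 d0)) of them, each contributing at most
   1; every farther point has ||p_i - p_j||^2 >= sigma ln n / 2 and contributes
   at most 1/n. As W is symmetric, C_i is the i-th row sum and ||W||_F^2 / n the
   average row sum, and two numbers in [1, P] are within a factor P of each other. *)

From Stdlib Require Import Reals List Lra Lia.
Open Scope R_scope.

Definition lsum (l : list nat) (f : nat -> R) : R := fold_right Rplus 0 (map f l).

Lemma lsum_le l f g : (forall j, In j l -> f j <= g j) -> lsum l f <= lsum l g.
Proof.
  unfold lsum; induction l as [|x l IH]; simpl; intros H; [lra|].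
  apply Rplus_le_compat; [apply H; left; reflexivity|].
  apply IH; intros j Hj; apply H; right; exact Hj.
Qed.

Lemma lsum_const l c : lsum l (fun _ => c) = c * INR (length l).
Proof.
  unfold lsum; induction l as [|x l IH]; simpl map; simpl fold_right.
  - simpl; ring.
  - rewrite IH; cbn [length]; rewrite S_INR; ring.
Qed.

Lemma lsum_nonneg l f : (forall j, In j l -> 0 <= f j) -> 0 <= lsum l f.
Proof.
  intros H; replace 0 with (lsum l (fun _ => 0)) by (rewrite lsum_const; ring).
  exact (lsum_le _ _ _ H).
Qed.

Lemma lsum_ge_term l f i : In i l -> (forall j, In j l -> 0 <= f j) -> f i <= lsum l f.
Proof.
  unfold lsum; induction l as [|x l IH]; simpl; intros Hi H; [contradiction|].
  destruct Hi as [<- | Hi].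
  - assert (0 <= lsum l f) by (apply lsum_nonneg; auto). unfold lsum in *; lra.
  - assert (0 <= f x) by auto. assert (f i <= fold_right Rplus 0 (map f l)) by auto. lra.
Qed.

Lemma lsum_indicator_le l (b : nat -> bool) a : 0 <= a ->
  lsum l (fun j => if b j then 1 else a) <= INR (length (filter b l)) + a * INR (length l).
Proof.
  intros Ha; unfold lsum; induction l as [|x l IH]; [simpl; lra|].
  cbn [filter map fold_right]; destruct (b x); cbn [length]; rewrite ?S_INR; lra.
Qed.

Lemma rsum_le_const n f c : (forall k, (k < n)%nat -> f k <= c) -> rsum n f <= c * INR n.
Proof.
  intros H; rewrite <- (length_seq n 0) at 2; rewrite <- lsum_const.
  apply lsum_le; intros k Hk; apply in_seq in Hk; apply H; lia.
Qed.

Lemma const_le_rsum n f c : (forall k, (k < n)%nat -> c <= f k) -> c * INR n <= rsum n f.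
Proof.
  intros H; rewrite <- (length_seq n 0) at 1; rewrite <- lsum_const.
  apply lsum_le; intros k Hk; apply in_seq in Hk; apply H; lia.
Qed.

Lemma within_factor_of_average n (f : nat -> R) P i : (0 < n)%nat ->
  (forall k, (k < n)%nat -> 1 <= f k <= P) -> (i < n)%nat ->
  1 / P * (rsum n f / INR n) <= f i /\ f i <= P * (rsum n f / INR n).
Proof.
  intros Hn Hf Hi.
  assert (Hn0 : 0 < INR n) by (apply lt_0_INR; exact Hn).
  destruct (Hf i Hi) as [Hi1 HiP].
  assert (Hlow : 1 <= rsum n f / INR n).
  { apply (Rmult_le_reg_r (INR n)); [lra|]. unfold Rdiv; rewrite Rmult_assoc, Rinv_l, Rmult_1_r by lra.
    apply const_le_rsum; intros k Hk; apply Hf, Hk. }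
  assert (Hhigh : rsum n f / INR n <= P).
  { apply (Rmult_le_reg_r (INR n)); [lra|]. unfold Rdiv; rewrite Rmult_assoc, Rinv_l, Rmult_1_r by lra.
    apply rsum_le_const; intros k Hk; apply Hf, Hk. }
  split.
  - assert (HP : 0 < P) by lra.
    apply (Rmult_le_reg_l P); [lra|].
    replace (P * (1 / P * (rsum n f / INR n))) with (rsum n f / INR n) by (field; lra).
    nra.
  - nra.
Qed.

Lemma exp_le x y : x <= y -> exp x <= exp y.
Proof. intros [H | ->]; [left; apply exp_increasing, H | right; reflexivity]. Qed.

Lemma sqdist_nonneg d x y : 0 <= sqdist d x y.
Proof. apply lsum_nonneg; intros; apply pow2_ge_0. Qed.

Lemma sqdist_sym d x y : sqdist d x y = sqdist d y x.
Proof. unfold sqdist, rsum; f_equal; apply map_ext; intros; ring. Qed.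

Lemma sqdist_self d x : sqdist d x x = 0.
Proof.
  unfold sqdist, rsum; transitivity (lsum (seq 0 d) (fun _ => 0)).
  - unfold lsum; f_equal; apply map_ext; intros; ring.
  - rewrite lsum_const; ring.
Qed.

Lemma Waff_sym sigma d p i j : Waff sigma d p i j = Waff sigma d p j i.
Proof. unfold Waff; rewrite sqdist_sym; reflexivity. Qed.

Lemma Waff_diag sigma d p i : Waff sigma d p i i = 1.
Proof. unfold Waff; rewrite sqdist_self, Ropp_0; unfold Rdiv; rewrite Rmult_0_l; apply exp_0. Qed.

Lemma Waff_le_1 sigma d p i j : 0 < sigma -> Waff sigma d p i j <= 1.
Proof.
  intros Hs; unfold Waff; rewrite <- exp_0.
  apply exp_le; unfold Rdiv.
  pose proof (sqdist_nonneg d (p i) (p j)).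
  pose proof (Rinv_0_lt_compat _ Hs). nra.
Qed.

Lemma Waff_sq_le_inv sigma d p i j x : 0 < sigma -> 0 < x ->
  sigma * ln x / 2 <= sqdist d (p i) (p j) -> Waff sigma d p i j ^ 2 <= / x.
Proof.
  intros Hs Hx Hfar; unfold Waff; set (q := sqdist d (p i) (p j)) in *.
  rewrite <- (exp_ln x) by exact Hx; rewrite <- exp_Ropp.
  replace (exp (- q / sigma) ^ 2) with (exp (- q / sigma + - q / sigma))
    by (rewrite exp_plus; ring).
  apply exp_le.
  replace (- q / sigma + - q / sigma) with (- (2 * q * / sigma)) by (field; lra).
  apply Ropp_le_contravar, (Rmult_le_reg_r sigma); [exact Hs|].
  rewrite Rmult_assoc, Rinv_l, Rmult_1_r by lra; lra.
Qed.

Definition sep_dist (sigma : R) (n : nat) : R := (1/10) * sigma / ln (INR n).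

Lemma ln_2_le_ln n : (2 <= n)%nat -> ln 2 <= ln (INR n).
Proof.
  intros Hn; assert (H2 : 2 <= INR n) by (apply (le_INR 2); exact Hn).
  destruct H2 as [H2 | <-]; [left; apply ln_increasing; lra | right; reflexivity].
Qed.

Lemma ln_2_pos : 0 < ln 2.
Proof. rewrite <- ln_1; apply ln_increasing; lra. Qed.

Lemma sep_dist_pos sigma n : 0 < sigma -> (2 <= n)%nat -> 0 < sep_dist sigma n.
Proof.
  intros Hs Hn; pose proof ln_2_pos; pose proof (ln_2_le_ln n Hn).
  unfold sep_dist, Rdiv; apply Rmult_lt_0_compat; [lra | apply Rinv_0_lt_compat; lra].
Qed.

Definition in_ball (d : nat) (c : nat -> R) (r : R) (x : nat -> R) : bool :=
  if Rle_dec (edist d c x) r then true else false.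

Lemma card_ball_le sigma d0 K d n p c r :
  sparse sigma d n p -> doubling d0 K d n p -> 0 < sep_dist sigma n -> sep_dist sigma n <= r ->
  INR (length (filter (fun j => in_ball d c r (p j)) (seq 0 n)))
    <= K * Rpower (r / sep_dist sigma n) d0.
Proof.
  intros Hsp Hdb Heps Hr; apply (Hdb c); [exact Heps | exact Hr | apply NoDup_filter, seq_NoDup | |].
  - intros j Hj; apply filter_In in Hj as [Hj Hb]; apply in_seq in Hj.
    unfold in_ball in Hb; destruct Rle_dec; [split; [lia | assumption] | discriminate].
  - intros j k Hj Hk Hjk.
    apply filter_In in Hj as [Hj _]; apply filter_In in Hk as [Hk _]; apply in_seq in Hj, Hk.
    apply Hsp; [lia | lia | exact Hjk].
Qed.

Definition row_sqsum (sigma : R) (d n : nat) (p : nat -> nat -> R) (i : nat) : R :=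
  rsum n (fun j => Waff sigma d p i j ^ 2).

Lemma col_sqnorm_row sigma d n p i : col_sqnorm sigma d n p i = row_sqsum sigma d n p i.
Proof. unfold col_sqnorm, row_sqsum, rsum; f_equal; apply map_ext; intros; rewrite Waff_sym; reflexivity. Qed.

Lemma row_sqsum_ge_1 sigma d n p i : (i < n)%nat -> 1 <= row_sqsum sigma d n p i.
Proof.
  intros Hi; replace 1 with (Waff sigma d p i i ^ 2) by (rewrite Waff_diag; ring).
  apply (lsum_ge_term _ (fun j => Waff sigma d p i j ^ 2)); [apply in_seq; lia|].
  intros; apply pow2_ge_0.
Qed.

Lemma row_sqsum_le sigma d0 K d n p i r : 0 < sigma -> (2 <= n)%nat ->
  sparse sigma d n p -> doubling d0 K d n p ->
  sep_dist sigma n <= r -> sigma * ln (INR n) / 2 <= r * r ->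
  row_sqsum sigma d n p i <= 1 + K * Rpower (r / sep_dist sigma n) d0.
Proof.
  intros Hs Hn Hsp Hdb Hr Hrr.
  assert (Hn1 : 1 < INR n) by (apply (lt_INR 1); lia).
  pose proof (sep_dist_pos sigma n Hs Hn) as Heps.
  set (b := fun j => in_ball d (p i) r (p j)).
  apply Rle_trans with (lsum (seq 0 n) (fun j => if b j then 1 else / INR n)).
  - apply lsum_le; intros j _; unfold b, in_ball; destruct Rle_dec as [Hin | Hout].
    + pose proof (Waff_le_1 sigma d p i j Hs).
      assert (0 < Waff sigma d p i j) by apply exp_pos; nra.
    + apply Waff_sq_le_inv; [exact Hs | lra |].
      apply Rnot_le_gt in Hout; unfold edist in Hout.
      pose proof (sqrt_sqrt _ (sqdist_nonneg d (p i) (p j))); nra.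
  - eapply Rle_trans; [apply lsum_indicator_le; left; apply Rinv_0_lt_compat; lra|].
    rewrite length_seq, Rinv_l by lra.
    unfold b; pose proof (card_ball_le sigma d0 K d n p (p i) r Hsp Hdb Heps Hr); lra.
Qed.

(* Any r >= sqrt(sigma ln n / 2) works; this one keeps r / sep_dist quadratic in ln n. *)
Definition ball_radius (sigma : R) (n : nat) : R := sep_dist sigma n + sigma / 2 + ln (INR n).

(* ball_radius / sep_dist = 1 + 5 L + 10 L^2 / sigma with L = ln n >= ln 2. *)
Definition ratio_const (sigma : R) : R := 1 / (ln 2 * ln 2) + 5 / ln 2 + 10 / sigma.

Section BallRadius.

Variables (sigma : R) (n : nat).
Hypotheses (Hs : 0 < sigma) (Hn : (2 <= n)%nat).

Let L := ln (INR n).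

Let HL2 : ln 2 <= L := ln_2_le_ln n Hn.

Lemma sep_dist_le_ball_radius : sep_dist sigma n <= ball_radius sigma n.
Proof. pose proof ln_2_pos; unfold ball_radius; fold L; lra. Qed.

Lemma ball_radius_sq_ge : sigma * ln (INR n) / 2 <= ball_radius sigma n * ball_radius sigma n.
Proof.
  pose proof ln_2_pos; pose proof (sep_dist_pos sigma n Hs Hn); unfold ball_radius; fold L.
  assert (0 <= (sigma / 2 - L) ^ 2) by apply pow2_ge_0; nra.
Qed.

Lemma ball_radius_ratio_le : ball_radius sigma n / sep_dist sigma n <= ratio_const sigma * (L * L).
Proof.
  pose proof ln_2_pos.
  assert (Hratio : ball_radius sigma n / sep_dist sigma n = 1 + 5 * L + 10 / sigma * (L * L))
    by (unfold ball_radius, sep_dist; fold L; field; lra).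
  assert (Hq : 1 <= L / ln 2) by (apply (Rmult_le_reg_r (ln 2)); [lra|]; field_simplify; lra).
  assert (H1 : 1 <= 1 / (ln 2 * ln 2) * (L * L))
    by (replace (1 / (ln 2 * ln 2) * (L * L)) with (L / ln 2 * (L / ln 2)) by (field; lra); nra).
  assert (H5 : 5 * L <= 5 / ln 2 * (L * L))
    by (replace (5 / ln 2 * (L * L)) with (5 * L * (L / ln 2)) by (field; lra); nra).
  rewrite Hratio; unfold ratio_const; lra.
Qed.

End BallRadius.

Lemma ratio_const_pos sigma : 0 < sigma -> 0 < ratio_const sigma.
Proof.
  intros Hs; pose proof ln_2_pos; unfold ratio_const.
  assert (0 < 1 / (ln 2 * ln 2)) by (apply Rdiv_lt_0_compat; nra).
  assert (0 < 5 / ln 2) by (apply Rdiv_lt_0_compat; lra).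
  assert (0 < 10 / sigma) by (apply Rdiv_lt_0_compat; lra).
  lra.
Qed.

Lemma Rpower_le_sq_bound x c L a : 0 <= a -> 0 < x -> 0 < c -> 0 < L ->
  x <= c * (L * L) -> Rpower x a <= Rpower c a * Rpower L (2 * a).
Proof.
  intros Ha Hx Hc HL Hxc.
  apply Rle_trans with (Rpower (c * (L * L)) a); [apply Rle_Rpower_l; lra|].
  rewrite <- Rpower_mult_distr, <- Rpower_mult by nra.
  replace 2 with (INR 2) by reflexivity; rewrite Rpower_pow by exact HL.
  right; simpl; rewrite Rmult_1_r; reflexivity.
Qed.

Lemma row_sqsum_le_polylog sigma d0 K d n p i : 0 < sigma -> 0 <= d0 -> 0 < K -> (2 <= n)%nat ->
  sparse sigma d n p -> doubling d0 K d n p ->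
  row_sqsum sigma d n p i
    <= (/ Rpower (ln 2) (2 * d0) + K * Rpower (ratio_const sigma) d0) * Rpower (ln (INR n)) (2 * d0).
Proof.
  intros Hs Hd0 HK Hn Hsp Hdb.
  pose proof ln_2_pos; pose proof (ln_2_le_ln n Hn) as HL2.
  set (X := Rpower (ln (INR n)) (2 * d0)); set (m := Rpower (ln 2) (2 * d0)).
  assert (Hm : 0 < m) by apply exp_pos.
  assert (HmX : 1 <= / m * X).
  { apply (Rmult_le_reg_l m); [exact Hm|].
    rewrite <- Rmult_assoc, Rinv_r, Rmult_1_l, Rmult_1_r by lra.
    apply Rle_Rpower_l; lra. }
  pose proof (sep_dist_pos sigma n Hs Hn) as Heps.
  pose proof (sep_dist_le_ball_radius sigma n Hs Hn) as Hr.
  assert (Hpow : Rpower (ball_radius sigma n / sep_dist sigma n) d0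
                   <= Rpower (ratio_const sigma) d0 * X).
  { apply Rpower_le_sq_bound; [exact Hd0 | | apply ratio_const_pos, Hs | lra |].
    - apply Rdiv_lt_0_compat; lra.
    - apply ball_radius_ratio_le; assumption. }
  eapply Rle_trans.
  { apply (row_sqsum_le sigma d0 K d n p i (ball_radius sigma n)); try assumption.
    apply ball_radius_sq_ge; assumption. }
  apply Rmult_le_compat_l with (r := K) in Hpow; lra.
Qed.

Theorem corollary1 :
  exists B : R, 0 < B /\
  forall (sigma d0 K : R), 0 < sigma -> 0 <= d0 -> 0 < K ->
  exists A : R, 0 < A /\
  forall (d n : nat) (p : nat -> nat -> R),
    (2 <= n)%nat ->
    sparse sigma d n p ->
    doubling d0 K d n p ->
    forall i, (i < n)%nat ->
      (1 / (A * Rpower (ln (INR n)) (B * d0))) * (frob_sq sigma d n p / INR n)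
        <= col_sqnorm sigma d n p i /\
      col_sqnorm sigma d n p i
        <= (A * Rpower (ln (INR n)) (B * d0)) * (frob_sq sigma d n p / INR n).
Proof.
  exists 2; split; [lra|].
  intros sigma d0 K Hs Hd0 HK.
  exists (/ Rpower (ln 2) (2 * d0) + K * Rpower (ratio_const sigma) d0); split.
  { pose proof (Rinv_0_lt_compat _ (exp_pos (2 * d0 * ln (ln 2)))).
    pose proof (exp_pos (d0 * ln (ratio_const sigma))).
    unfold Rpower; nra. }
  intros d n p Hn Hsp Hdb i Hi.
  rewrite col_sqnorm_row.
  apply (within_factor_of_average n (row_sqsum sigma d n p)); [lia | | exact Hi].
  intros k Hk; split.
  - apply row_sqsum_ge_1, Hk.
  - apply row_sqsum_le_polylog; assumption.
Qed.
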